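(* Let $h$ be a positive function and $v$ a solution of $\ddot v=\frac{2}{h^2}(e^v-1)$. If $v$ has a minimum at $m$, then $v(m)\ge0$; if $v$ has a maximum at $M$, then $v(M)\le0$. Moreover, if $v$ satisfies the initial conditions $v(\delta)<0$, $\dot v(\delta)<0$ (resp. $v(\delta)>0$, $\dot v(\delta)>0$), then $v<0$ (resp. $v>0$) on $(\delta,\infty)$.
   Context: Here $v$ is a real function of $r$ (defined on $[\delta,\infty)$ for the second statement) and dots denote derivatives in $r$; minima and maxima are taken at interior points where $\dot v=0$. *)

From Stdlib Require Export Reals.
Open Scope R_scope.

Definition solves_on (P : R -> Prop) (h v dv : R -> R) : Prop :=
  forall r, P r ->
    derivable_pt_lim v r (dv r) /\
    derivable_pt_lim dv r (2 / (h r) ^ 2 * (exp (v r) - 1)).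

Definition is_local_min (f : R -> R) (m : R) : Prop :=
  exists eps, 0 < eps /\ forall x, Rabs (x - m) < eps -> f m <= f x.

Definition is_local_max (f : R -> R) (m : R) : Prop :=
  exists eps, 0 < eps /\ forall x, Rabs (x - m) < eps -> f x <= f m.

Definition right_cont (f : R -> R) (x0 : R) : Prop :=
  forall eps, 0 < eps -> exists d, 0 < d /\
    forall x, x0 < x < x0 + d -> Rabs (f x - f x0) < eps.

(* At an interior local minimum the second derivative is nonnegative, and for this equation its
   sign is that of v, so a minimum value is never negative; dually a maximum value is never
   positive.  If v starts negative and decreasing at delta and later reaches a nonnegative value,
   v attains on the way a negative interior minimum, which is impossible; the positive case is
   the same argument applied to -v, whose minima are the maxima of v. *)
From Stdlib Require Import Reals Lra.
Open Scope R_scope.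

Lemma solves_on_weaken (P Q : R -> Prop) (h v dv : R -> R) :
  (forall r, Q r -> P r) -> solves_on P h v dv -> solves_on Q h v dv.
Proof. intros HQP Hs r Hr. exact (Hs r (HQP r Hr)). Qed.

Lemma is_local_min_opp (f : R -> R) (m : R) :
  is_local_max f m -> is_local_min (fun x => - f x) m.
Proof.
  intros [eps [Heps Hmax]]. exists eps. split; [exact Heps|].
  intros x Hx. specialize (Hmax x Hx). lra.
Qed.

Lemma is_local_max_of_opp (f : R -> R) (m : R) :
  is_local_min (fun x => - f x) m -> is_local_max f m.
Proof.
  intros [eps [Heps Hmin]]. exists eps. split; [exact Heps|].
  intros x Hx. specialize (Hmin x Hx). lra.
Qed.

Lemma right_cont_opp (f : R -> R) (x0 : R) :
  right_cont f x0 -> right_cont (fun x => - f x) x0.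
Proof.
  intros Hf eps Heps. destruct (Hf eps Heps) as [d [Hd Hnear]].
  exists d. split; [exact Hd|]. intros x Hx.
  replace (- f x - - f x0) with (- (f x - f x0)) by ring.
  rewrite Rabs_Ropp. exact (Hnear x Hx).
Qed.

Lemma derivable_pt_lim_neg_right_lt (f : R -> R) (x l : R) :
  derivable_pt_lim f x l -> l < 0 ->
  exists d, 0 < d /\ forall t, 0 < t < d -> f (x + t) < f x.
Proof.
  intros Hf Hl. destruct (Hf (- l)) as [d Hd]; [lra|].
  exists d. split; [apply cond_pos|]. intros t Ht.
  assert (Hq := Hd t ltac:(lra) ltac:(rewrite Rabs_pos_eq; lra)).
  apply Rabs_def2 in Hq.
  assert (Hslope : (f (x + t) - f x) / t < 0) by lra.
  assert (Hprod : f (x + t) - f x = (f (x + t) - f x) / t * t) by (field; lra).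
  nra.
Qed.

(* Fermat gives dv m = 0; if dv'(m) < 0 then dv < 0 just right of m, and by the mean value
   theorem v drops below v m there. *)
Lemma local_min_second_deriv_nonneg (v dv : R -> R) (m e L : R) :
  0 < e -> (forall x, Rabs (x - m) < e -> derivable_pt_lim v x (dv x)) ->
  derivable_pt_lim dv m L -> is_local_min v m -> 0 <= L.
Proof.
  intros He Hv HL [eps [Heps Hmin]].
  destruct (Rle_or_lt 0 L) as [|HLneg]; [assumption|exfalso].
  assert (Hm : Rabs (m - m) < e) by (rewrite Rminus_diag, Rabs_R0; lra).
  assert (Hcrit : dv m = 0).
  { rewrite <- (derive_pt_eq_0 v m (dv m) (exist _ (dv m) (Hv m Hm)) (Hv m Hm)).
    apply (deriv_minimum v (m - eps) (m + eps)); try lra.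
    intros x Hx1 Hx2. apply Hmin. apply Rabs_def1; lra. }
  destruct (derivable_pt_lim_neg_right_lt dv m L HL HLneg) as [d [Hd Hdec]].
  set (t := Rmin d (Rmin eps e) / 2).
  assert (Ht : 0 < t /\ t < d /\ t < eps /\ t < e).
  { unfold t. pose proof (Rmin_l d (Rmin eps e)). pose proof (Rmin_r d (Rmin eps e)).
    pose proof (Rmin_l eps e). pose proof (Rmin_r eps e).
    assert (0 < Rmin d (Rmin eps e)) by (repeat apply Rmin_pos; lra). lra. }
  destruct (MVT_cor2 v dv m (m + t)) as [c [Hmvt Hc]]; [lra| |].
  { intros c Hc. apply Hv. apply Rabs_def1; lra. }
  assert (Hdvc : dv c < 0).
  { replace c with (m + (c - m)) by ring. rewrite <- Hcrit. apply Hdec. lra. }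
  assert (Hvt : v m <= v (m + t)) by (apply Hmin; apply Rabs_def1; lra).
  replace (m + t - m) with t in Hmvt by ring. nra.
Qed.

Lemma local_max_second_deriv_nonpos (v dv : R -> R) (m e L : R) :
  0 < e -> (forall x, Rabs (x - m) < e -> derivable_pt_lim v x (dv x)) ->
  derivable_pt_lim dv m L -> is_local_max v m -> L <= 0.
Proof.
  intros He Hv HL Hmax.
  enough (0 <= - L) by lra.
  apply (local_min_second_deriv_nonneg (fun x => - v x) (fun x => - dv x) m e).
  - exact He.
  - intros x Hx. exact (derivable_pt_lim_opp _ _ _ (Hv x Hx)).
  - exact (derivable_pt_lim_opp _ _ _ HL).
  - exact (is_local_min_opp v m Hmax).
Qed.

Lemma forcing_sign_nonneg (h x : R) : 0 < h -> 0 <= 2 / h ^ 2 * (exp x - 1) -> 0 <= x.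
Proof.
  intros Hh Hf. destruct (Rle_or_lt 0 x) as [|Hx]; [assumption|exfalso].
  pose proof (exp_increasing x 0 Hx) as Hexp. rewrite exp_0 in Hexp.
  assert (0 < 2 / h ^ 2) by (apply Rdiv_lt_0_compat; [lra | apply pow_lt; lra]).
  nra.
Qed.

Lemma forcing_sign_nonpos (h x : R) : 0 < h -> 2 / h ^ 2 * (exp x - 1) <= 0 -> x <= 0.
Proof.
  intros Hh Hf. destruct (Rle_or_lt x 0) as [|Hx]; [assumption|exfalso].
  pose proof (exp_increasing 0 x Hx) as Hexp. rewrite exp_0 in Hexp.
  assert (0 < 2 / h ^ 2) by (apply Rdiv_lt_0_compat; [lra | apply pow_lt; lra]).
  nra.
Qed.

Lemma solution_local_min_nonneg (h v dv : R -> R) (m e : R) :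
  0 < e -> 0 < h m -> solves_on (fun x => Rabs (x - m) < e) h v dv ->
  is_local_min v m -> 0 <= v m.
Proof.
  intros He Hh Hs Hmin. apply (forcing_sign_nonneg (h m)); [exact Hh|].
  assert (Hm : Rabs (m - m) < e) by (rewrite Rminus_diag, Rabs_R0; lra).
  apply (local_min_second_deriv_nonneg v dv m e); [exact He | | exact (proj2 (Hs m Hm)) | exact Hmin].
  intros x Hx. exact (proj1 (Hs x Hx)).
Qed.

Lemma solution_local_max_nonpos (h v dv : R -> R) (m e : R) :
  0 < e -> 0 < h m -> solves_on (fun x => Rabs (x - m) < e) h v dv ->
  is_local_max v m -> v m <= 0.
Proof.
  intros He Hh Hs Hmax. apply (forcing_sign_nonpos (h m)); [exact Hh|].
  assert (Hm : Rabs (m - m) < e) by (rewrite Rminus_diag, Rabs_R0; lra).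
  apply (local_max_second_deriv_nonpos v dv m e); [exact He | | exact (proj2 (Hs m Hm)) | exact Hmax].
  intros x Hx. exact (proj1 (Hs x Hx)).
Qed.

Lemma solves_on_interval_ball (a b m : R) (h v dv : R -> R) :
  a < m < b -> solves_on (fun r => a < r < b) h v dv ->
  solves_on (fun x => Rabs (x - m) < Rmin (m - a) (b - m)) h v dv.
Proof.
  intros Hm. apply solves_on_weaken. intros x Hx. apply Rabs_def2 in Hx.
  pose proof (Rmin_l (m - a) (b - m)). pose proof (Rmin_r (m - a) (b - m)). lra.
Qed.

Lemma solves_on_halfline_ball (delta m : R) (h v dv : R -> R) :
  delta < m -> solves_on (fun r => delta < r) h v dv ->
  solves_on (fun x => Rabs (x - m) < m - delta) h v dv.
Proof.
  intros Hm. apply solves_on_weaken. intros x Hx. apply Rabs_def2 in Hx. lra.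
Qed.

Section NegativeStart.

Variables (w dw : R -> R) (delta : R).
Hypothesis w_deriv : forall x, delta < x -> derivable_pt_lim w x (dw x).
Hypothesis w_right_cont : right_cont w delta.
Hypothesis dw_right_cont : right_cont dw delta.
Hypothesis w_start_neg : w delta < 0.
Hypothesis dw_start_neg : dw delta < 0.

Lemma initial_descent (r : R) :
  delta < r -> exists t1 t2, delta < t1 < t2 /\ t2 < r /\ w t2 < w t1 /\ w t2 < 0.
Proof.
  intros Hr.
  destruct (dw_right_cont (- dw delta)) as [d1 [Hd1 Hdw]]; [lra|].
  destruct (w_right_cont (- w delta)) as [d2 [Hd2 Hw]]; [lra|].
  set (e := Rmin (Rmin d1 d2) (r - delta)).
  assert (He : 0 < e /\ e <= d1 /\ e <= d2 /\ e <= r - delta).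
  { unfold e. pose proof (Rmin_l (Rmin d1 d2) (r - delta)).
    pose proof (Rmin_r (Rmin d1 d2) (r - delta)).
    pose proof (Rmin_l d1 d2). pose proof (Rmin_r d1 d2).
    assert (0 < Rmin (Rmin d1 d2) (r - delta)) by (repeat apply Rmin_pos; lra). lra. }
  exists (delta + e / 3), (delta + 2 * e / 3).
  destruct (MVT_cor2 w dw (delta + e / 3) (delta + 2 * e / 3)) as [c [Hmvt Hc]]; [lra| |].
  { intros c Hc. apply w_deriv. lra. }
  assert (Hdwc : dw c < 0) by (assert (K := Hdw c ltac:(lra)); apply Rabs_def2 in K; lra).
  assert (Hwt2 : w (delta + 2 * e / 3) < 0).
  { assert (K := Hw (delta + 2 * e / 3) ltac:(lra)). apply Rabs_def2 in K. lra. }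
  repeat split; try lra. nra.
Qed.

Lemma interior_min_below (t1 t2 r : R) :
  delta < t1 -> t1 < t2 < r -> w t2 < w t1 -> w t2 < w r ->
  exists m, t1 < m < r /\ w m <= w t2 /\ is_local_min w m.
Proof.
  intros Ht1 Ht2 Hlt1 Hltr.
  destruct (continuity_ab_min w t1 r) as [m [Hmin Hm]]; [lra| |].
  { intros c Hc. apply derivable_continuous_pt. exists (dw c). apply w_deriv. lra. }
  assert (Hmt2 : w m <= w t2) by (apply Hmin; lra).
  assert (m <> t1) by (intros ->; lra).
  assert (m <> r) by (intros ->; lra).
  exists m. split; [lra|]. split; [exact Hmt2|].
  exists (Rmin (m - t1) (r - m)). split; [apply Rmin_pos; lra|].
  intros x Hx. apply Rabs_def2 in Hx.
  pose proof (Rmin_l (m - t1) (r - m)). pose proof (Rmin_r (m - t1) (r - m)).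
  apply Hmin. lra.
Qed.

Lemma negative_interior_min (r : R) :
  delta < r -> 0 <= w r -> exists m, delta < m < r /\ w m < 0 /\ is_local_min w m.
Proof.
  intros Hr Hwr.
  destruct (initial_descent r Hr) as [t1 [t2 [Ht [Ht2r [Hdesc Hneg]]]]].
  destruct (interior_min_below t1 t2 r) as [m [Hm [Hmt2 Hmin]]]; try lra.
  exists m. repeat split; try lra. exact Hmin.
Qed.

End NegativeStart.

Theorem mainTheorem13 :
  (forall (a b : R) (h v dv : R -> R) (m : R),
      (forall r, a < r < b -> 0 < h r) ->
      solves_on (fun r => a < r < b) h v dv ->
      a < m < b -> is_local_min v m -> 0 <= v m) /\
  (forall (a b : R) (h v dv : R -> R) (M : R),
      (forall r, a < r < b -> 0 < h r) ->
      solves_on (fun r => a < r < b) h v dv ->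
      a < M < b -> is_local_max v M -> v M <= 0) /\
  (forall (delta : R) (h v dv : R -> R),
      (forall r, delta <= r -> 0 < h r) ->
      solves_on (fun r => delta < r) h v dv ->
      right_cont v delta -> right_cont dv delta ->
      v delta < 0 -> dv delta < 0 ->
      forall r, delta < r -> v r < 0) /\
  (forall (delta : R) (h v dv : R -> R),
      (forall r, delta <= r -> 0 < h r) ->
      solves_on (fun r => delta < r) h v dv ->
      right_cont v delta -> right_cont dv delta ->
      0 < v delta -> 0 < dv delta ->
      forall r, delta < r -> 0 < v r).
Proof.
  split; [|split; [|split]].
  - intros a b h v dv m Hh Hs Hm.
    apply (solution_local_min_nonneg h v dv m (Rmin (m - a) (b - m)));
      [apply Rmin_pos; lra | exact (Hh m Hm) | exact (solves_on_interval_ball a b m h v dv Hm Hs)].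
  - intros a b h v dv M Hh Hs HM.
    apply (solution_local_max_nonpos h v dv M (Rmin (M - a) (b - M)));
      [apply Rmin_pos; lra | exact (Hh M HM) | exact (solves_on_interval_ball a b M h v dv HM Hs)].
  - intros delta h v dv Hh Hs Cv Cdv Hv0 Hdv0 r Hr.
    destruct (Rlt_or_le (v r) 0) as [|Hvr]; [assumption|exfalso].
    destruct (negative_interior_min v dv delta (fun x Hx => proj1 (Hs x Hx)) Cv Cdv Hv0 Hdv0 r Hr Hvr)
      as [m [Hm [Hvm Hmin]]].
    assert (0 <= v m); [|lra].
    apply (solution_local_min_nonneg h v dv m (m - delta)); try lra.
    + apply Hh. lra.
    + apply solves_on_halfline_ball; [lra | exact Hs].
    + exact Hmin.
  - intros delta h v dv Hh Hs Cv Cdv Hv0 Hdv0 r Hr.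
    destruct (Rlt_or_le 0 (v r)) as [|Hvr]; [assumption|exfalso].
    destruct (negative_interior_min (fun x => - v x) (fun x => - dv x) delta
                (fun x Hx => derivable_pt_lim_opp _ _ _ (proj1 (Hs x Hx)))
                (right_cont_opp v delta Cv) (right_cont_opp dv delta Cdv)
                ltac:(lra) ltac:(lra) r Hr ltac:(lra)) as [m [Hm [Hvm Hmin]]].
    assert (v m <= 0); [|lra].
    apply (solution_local_max_nonpos h v dv m (m - delta)); try lra.
    + apply Hh. lra.
    + apply solves_on_halfline_ball; [lra | exact Hs].
    + exact (is_local_max_of_opp v m Hmin).
Qed.
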